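(* Let $0<\delta<\frac12$, let $f\in\mathrm{Diff}_+^{1,\delta}(I)$ and let $G\subseteq\mathrm{Diff}_0^3(I)$. Then for every $C>0$ the set $A_C=\{\log(g'): g\in G,\ p_\delta(g\circ f)\le C\}$ has compact closure in the space $C(I)$ of continuous real functions on $I$ with the sup metric.
   Context: $I=[0,1]$. $\mathrm{Diff}_+^1(I)$ is the set of $C^1$ diffeomorphisms of $I$ fixing $0$ and $1$; $\mathrm{Diff}_+^{1,\delta}(I)$ is the set of $f\in\mathrm{Diff}_+^1(I)$ with $f'$ Hölder of exponent $\delta$. $\mathrm{Diff}_0^3(I)$ is the set of $C^3$ diffeomorphisms $f$ of $I$ fixing $0$ and $1$ with $f'(0)=f'(1)=1$. For $f\in\mathrm{Diff}_+^{1,\delta}(I)$, $p_\delta(f)=|\log(f'(0))|+\sup_{t_1\ne t_2\in I}\frac{|\log(f'(t_2))-\log(f'(t_1))|}{|t_2-t_1|^\delta}$. *)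

From HB Require Import structures.
From mathcomp Require Import all_boot all_order all_algebra.
From mathcomp Require Import all_classical all_reals all_analysis.
Set Implicit Arguments. Unset Strict Implicit. Unset Printing Implicit Defensive.
Import Order.TTheory GRing.Theory Num.Theory.
Import numFieldNormedType.Exports.
Local Open Scope classical_set_scope.
Local Open Scope ring_scope.

Section Defs.
Variable R : realType.

Definition II : set R := `[0, 1]%classic.

Definition Ideriv (f : R -> R) (x d : R) : Prop :=
  (fun y => (f y - f x) / (y - x)) @ within (II `\ x) (nbhs x) --> d.

Fixpoint CkI (k : nat) (f : R -> R) : Prop :=
  match k with
  | 0%N => {within II, continuous f}
  | k'.+1 => exists f1 : R -> R, (forall x, II x -> Ideriv f x (f1 x)) /\ CkI k' f1
  end.

Definition DiffI (k : nat) (f : R -> R) : Prop :=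
  f 0 = 0 /\ f 1 = 1 /\
  (exists h : R -> R,
     (forall x, II x -> II (f x) /\ II (h x) /\ h (f x) = x /\ f (h x) = x) /\
     CkI k f /\ CkI k h).

Definition DiffI1delta (delta : R) (f : R -> R) : Prop :=
  DiffI 1 f /\
  exists f1 : R -> R, (forall x, II x -> Ideriv f x (f1 x)) /\
    exists K : R, forall t1 t2, II t1 -> II t2 ->
      `|f1 t2 - f1 t1| <= K * (`|t2 - t1| `^ delta).

Definition Diff03 (g : R -> R) : Prop :=
  DiffI 3 g /\
  exists g1 : R -> R, (forall x, II x -> Ideriv g x (g1 x)) /\ g1 0 = 1 /\ g1 1 = 1.

Definition pdelta (delta : R) (f1 : R -> R) : \bar R :=
  (`|ln (f1 0)|%:E +
   ereal_sup [set r : \bar R | exists t1 t2 : R, II t1 /\ II t2 /\ t1 <> t2 /\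
       r = (`|ln (f1 t2) - ln (f1 t1)| / (`|t2 - t1| `^ delta))%:E])%E.

(* A_C = { log g' : g in G, p_delta(g o f) <= C }, as functions R -> R
   (only their values on I matter in the topology used below) *)
Definition A_C (delta C : R) (f : R -> R) (G : set (R -> R)) : set (R -> R) :=
  [set phi | exists g g1 h1 : R -> R,
     G g /\ (forall x, II x -> Ideriv g x (g1 x)) /\
     (forall x, II x -> Ideriv (g \o f) x (h1 x)) /\
     (pdelta delta h1 <= C%:E)%E /\
     phi = (fun x => ln (g1 x))].

End Defs.

(** A function [phi = log g'] in [A_C] satisfies
    [phi (f t) = log (g o f)' t - log f' t].  Both terms on the right are
    [delta]-Hölder on [I] (the first with constant [C] by [p_delta (g o f) <= C],
    the second because [f'] is Hölder and bounded away from [0]), and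
    [|log (g o f)' 0| <= C].  Hence the maps [phi o f], [phi] in [A_C], are
    uniformly bounded and equi-Hölder; composing with the uniformly continuous
    inverse of [f] makes [A_C] uniformly bounded and equicontinuous on [I], and
    the Arzelà-Ascoli theorem gives the compactness of its closure. *)

From HB Require Import structures.
From mathcomp Require Import all_boot all_order all_algebra.
From mathcomp Require Import all_classical all_reals all_analysis.
From mathcomp Require Import ring lra.
Set Implicit Arguments. Unset Strict Implicit. Unset Printing Implicit Defensive.
Import Order.TTheory GRing.Theory Num.Theory.
Import numFieldNormedType.Exports.
Local Open Scope classical_set_scope.
Local Open Scope ring_scope.

Section RelativeCalculus.
Variable R : realType.
Implicit Types (F H : R -> R) (x y d : R).

Lemma IIP y : @II R y <-> 0 <= y <= 1.
Proof. by rewrite /II /= in_itv. Qed.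

Lemma min_le_l (a b : R) : Num.min a b <= a.
Proof. by rewrite ge_min lexx. Qed.

Lemma min_le_r (a b : R) : Num.min a b <= b.
Proof. by rewrite ge_min lexx orbT. Qed.

Lemma II0 : @II R 0. Proof. by apply/IIP; rewrite lexx ler01. Qed.
Lemma II1 : @II R 1. Proof. by apply/IIP; rewrite lexx ler01. Qed.

Lemma near_withinRP (A : set R) x (P : R -> Prop) :
  (\forall y \near within A (nbhs x), P y) <->
  exists2 e : R, 0 < e & forall y, A y -> `|y - x| < e -> P y.
Proof.
rewrite near_withinE; split.
  move=> /nbhs_ballP [e e0 H]; exists e => // y Ay yx; apply: H => //.
  by rewrite /ball /= distrC.
move=> [e e0 H]; apply/nbhs_ballP; exists e => // y; rewrite /ball /= => xy Ay.
by apply: H => //; rewrite distrC.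
Qed.

Lemma cvg_withinRP (A : set R) x F (l : R) :
  F @ within A (nbhs x) --> l <->
  forall e, 0 < e -> exists2 eta : R, 0 < eta &
     forall y, A y -> `|y - x| < eta -> `|F y - l| < e.
Proof.
rewrite cvgrPdist_lt; split.
  move=> H e e0; have /near_withinRP [eta eta0 Heta] := H e e0.
  by exists eta => // y Ay yx; rewrite distrC; apply: Heta.
move=> H e e0; apply/near_withinRP; have [eta eta0 Heta] := H e e0.
by exists eta => // y Ay yx; rewrite distrC; apply: Heta.
Qed.

Lemma IderivP F x d : Ideriv F x d <->
  forall e, 0 < e -> exists2 eta : R, 0 < eta &
   forall y, II y -> y != x -> `|y - x| < eta -> `|(F y - F x) / (y - x) - d| < e.
Proof.
rewrite /Ideriv cvg_withinRP; split.
  move=> H e e0; have [eta eta0 He] := H e e0; exists eta => // y Iy yx.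
  by apply: He; split => //; apply/eqP.
move=> H e e0; have [eta eta0 He] := H e e0; exists eta => // y [Iy yx].
by apply: He => //; apply/eqP.
Qed.

Lemma II_near_neq {x eta : R} : II x -> 0 < eta ->
  exists y, [/\ II y, y != x & `|y - x| < eta].
Proof.
move=> /IIP /andP[x0 x1] eta0.
set r := Num.min (eta / 2) (1 / 2).
have r0 : 0 < r by rewrite lt_min; apply/andP; split; lra.
have r1 : r <= eta / 2 by rewrite ge_min lexx.
have r2 : r <= 1 / 2 by rewrite ge_min lexx orbT.
have [xh|xh] := lerP x (1 / 2); [exists (x + r) | exists (x - r)]; split.
- by apply/IIP; apply/andP; split; lra.
- by apply/eqP => H; lra.
- by rewrite addrAC subrr add0r gtr0_norm //; lra.
- by apply/IIP; apply/andP; split; lra.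
- by apply/eqP => H; lra.
- by rewrite addrAC subrr add0r normrN gtr0_norm //; lra.
Qed.

Lemma Ideriv_unique {F x a b} : II x -> Ideriv F x a -> Ideriv F x b -> a = b.
Proof.
move=> Ix /IderivP Ha /IderivP Hb; apply/eqP; apply/negPn/negP => ab.
have e0 : 0 < `|a - b| / 2 by rewrite divr_gt0 // normr_gt0 subr_eq0.
have [e1 e10 H1] := Ha _ e0; have [e2 e20 H2] := Hb _ e0.
have m0 : 0 < Num.min e1 e2 by rewrite lt_min e10 e20.
have [y [Iy yx yxe]] := II_near_neq Ix m0.
have h1 := H1 y Iy yx (lt_le_trans yxe (min_le_l _ _)).
have h2 := H2 y Iy yx (lt_le_trans yxe (min_le_r _ _)).
have : `|a - b| <= `|(F y - F x) / (y - x) - a| + `|(F y - F x) / (y - x) - b|.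
  by rewrite (distrC _ a); apply: le_trans (ler_normD _ _); rewrite addrA subrK.
lra.
Qed.

Definition Icont F x := forall e, 0 < e ->
  exists2 eta : R, 0 < eta & forall y, II y -> `|y - x| < eta -> `|F y - F x| < e.

Lemma Ideriv_Icont {F x d} : Ideriv F x d -> Icont F x.
Proof.
move=> /IderivP H e e0; have [eta1 eta10 H1] := H 1 ltr01.
set k := `|d| + 1.
have k0 : 0 < k by rewrite /k; have := normr_ge0 d; lra.
have eta20 : 0 < e / k by rewrite divr_gt0.
have keta : k * (e / k) = e by rewrite mulrC divfK // gt_eqF.
exists (Num.min eta1 (e / k)); first by rewrite lt_min eta10 eta20.
move=> y Iy; have [->|yx] := eqVneq y x; first by move=> _; rewrite subrr normr0.
move=> yxe; have := H1 y Iy yx (lt_le_trans yxe (min_le_l _ _)).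
have yxk := lt_le_trans yxe (min_le_r _ _).
set Q := (F y - F x) / (y - x) => HQ.
have -> : F y - F x = Q * (y - x) by rewrite /Q divfK // subr_eq0.
rewrite normrM.
have hQ : `|Q| <= `|Q - d| + `|d| by apply: le_trans (ler_normD _ _); rewrite subrK.
have := normr_ge0 (y - x); have := normr_ge0 Q.
rewrite /k in keta k0 *; nra.
Qed.

Lemma Ideriv_id F x : II x -> (forall y, II y -> F y = y) -> Ideriv F x 1.
Proof.
move=> Ix HF; apply/IderivP => e e0; exists 1 => // y Iy yx _.
by rewrite !HF // divff ?subr_eq0 // subrr normr0.
Qed.

Lemma Ideriv_comp {F H x a b} : II x ->
  (forall y, II y -> II (F y)) -> (forall y, II y -> F y = F x -> y = x) ->
  Ideriv F x a -> Ideriv H (F x) b -> Ideriv (H \o F) x (b * a).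
Proof.
move=> Ix FI Finj DF DH; have Fc := Ideriv_Icont DF.
move/IderivP: DF => DF; move/IderivP: DH => DH; apply/IderivP => e e0.
set k := `|a| + 1; set B := `|b| + 1.
have k0 : 0 < k by rewrite /k; have := normr_ge0 a; lra.
have B0 : 0 < B by rewrite /B; have := normr_ge0 b; lra.
set e2 := e / (2 * B); set e3 := e / (2 * k).
have e20 : 0 < e2 by rewrite divr_gt0 // mulr_gt0.
have e30 : 0 < e3 by rewrite divr_gt0 // mulr_gt0.
have Be2 : B * e2 = e / 2 by rewrite /e2; field; rewrite gt_eqF.
have ke3 : k * e3 = e / 2 by rewrite /e3; field; rewrite gt_eqF.
have m10 : 0 < Num.min 1 e2 by rewrite lt_min ltr01 e20.
have [eta1 eta10 H1] := DF _ m10.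
have [rho rho0 Hrho] := DH _ e30.
have [eta2 eta20 H2] := Fc _ rho0.
exists (Num.min eta1 eta2); first by rewrite lt_min eta10 eta20.
move=> y Iy yx yxe.
have Fyx : F y != F x by apply: contra_neq yx => /(Finj y Iy).
have := H1 y Iy yx (lt_le_trans yxe (min_le_l _ _)).
have := Hrho (F y) (FI y Iy) Fyx (H2 y Iy (lt_le_trans yxe (min_le_r _ _))).
set QF := (F y - F x) / (y - x); set QH := (H (F y) - H (F x)) / (F y - F x).
move=> hQH hQF.
have -> : (H (F y) - H (F x)) / (y - x) = QH * QF.
  by rewrite /QH /QF mulrA divfK // subr_eq0.
have -> : QH * QF - b * a = (QH - b) * QF + b * (QF - a) by ring.
apply: le_lt_trans (ler_normD _ _) _; rewrite (normrM (QH - b)) (normrM b).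
have hq : `|QF| <= `|QF - a| + `|a| by apply: le_trans (ler_normD _ _); rewrite subrK.
have qk : `|QF| <= k by have := min_le_l 1 e2; rewrite /k; lra.
have T1 : `|QH - b| * `|QF| <= e3 * k by apply: ler_pM => //; apply: ltW.
have T2 : `|b| * `|QF - a| <= `|b| * e2.
  by apply: ler_wpM2l => //; have := min_le_r 1 e2; lra.
rewrite /B in Be2; lra.
Qed.

End RelativeCalculus.

Arguments II0 {R}.
Arguments II1 {R}.

Section ContinuityOnI.
Variable R : realType.
Implicit Types (F H : R -> R) (x y d : R).

Lemma Icont_within F (a b : R) : 0 <= a -> b <= 1 ->
  (forall x, II x -> Icont F x) -> {within `[a, b], continuous F}.
Proof.
move=> a0 b1 Fc; apply/subspace_continuousP => x; rewrite /= in_itv /= => /andP[xa xb].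
have Ix : II x by apply/IIP; apply/andP; split; lra.
apply/cvg_withinRP => e e0; have [eta eta0 H] := Fc x Ix e e0.
exists eta => // y; rewrite /= in_itv /= => /andP[ya yb]; apply: H.
by apply/IIP; apply/andP; split; lra.
Qed.

Lemma Icont_eq F H x : (forall y, II y -> F y = H y) -> II x ->
  Icont F x -> Icont H x.
Proof.
move=> FH Ix Fc e e0; have [eta eta0 He] := Fc e e0; exists eta => // y Iy yx.
by rewrite -!FH //; apply: He.
Qed.

Lemma Icont_gt0 F : (forall x, II x -> Icont F x) ->
  (forall x, II x -> F x != 0) -> 0 < F 0 -> forall x, II x -> 0 < F x.
Proof.
move=> Fc Fn F0 x Ix; rewrite ltNge; apply/negP => Fx.
move/IIP: (Ix) => /andP[x0 x1].
have hv : Num.min (F 0) (F x) <= 0 <= Num.max (F 0) (F x).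
  by rewrite ge_min le_max Fx (ltW F0) orbT.
have [c + Fc0] := IVT x0 (Icont_within (lexx 0) x1 Fc) hv.
rewrite in_itv /= => /andP[c0 cx].
have Ic : II c by apply/IIP; apply/andP; split; lra.
by move: (Fn c Ic); rewrite Fc0 eqxx.
Qed.

Lemma Icont_min F : (forall x, II x -> Icont F x) ->
  (forall x, II x -> 0 < F x) -> exists2 m : R, 0 < m & forall x, II x -> m <= F x.
Proof.
move=> Fc Fp.
have [c Ic Hc] := EVT_min ler01 (Icont_within (lexx 0) (lexx 1) Fc).
by exists (F c); [exact: Fp | move=> x Ix; apply: Hc].
Qed.

Lemma powR_le1 x d : 0 <= d -> 0 <= x <= 1 -> x `^ d <= 1.
Proof.
move=> d0 /andP[x0 x1]; apply: (@le_trans _ _ (1 `^ d)); last by rewrite powR1.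
by apply: ge0_ler_powR; rewrite ?nnegrE ?ler01.
Qed.

Lemma powR_small d e K : 0 < d -> 0 < e ->
  exists2 eta : R, 0 < eta & forall t, 0 <= t -> t <= eta -> K * t `^ d < e.
Proof.
move=> d0 e0; set c := e / (`|K| + 1).
have K1 : 0 < `|K| + 1 by have := normr_ge0 K; lra.
have c0 : 0 < c by rewrite divr_gt0.
exists (c `^ d^-1); first by rewrite powR_gt0.
move=> t t0 teta.
have tc : t `^ d <= c.
  rewrite -[c in _ <= c](@powRr1 _ c) ?(ltW c0)// -(@mulVf _ d) ?gt_eqF// powRrM.
  by apply: ge0_ler_powR => //; [exact: ltW | rewrite nnegrE powR_ge0].
have : K * t `^ d <= `|K| * t `^ d by apply: ler_wpM2r; [exact: powR_ge0 | exact: ler_norm].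
have : `|K| * t `^ d <= `|K| * c by apply: ler_wpM2l.
have : `|K| * c < e by rewrite /c mulrA ltr_pdivrMr // mulrC ltr_pM2l //; lra.
lra.
Qed.

Lemma holder_Icont F d K : 0 < d ->
  (forall s t, II s -> II t -> `|F t - F s| <= K * `|t - s| `^ d) ->
  forall x, II x -> Icont F x.
Proof.
move=> d0 HF x Ix e e0; have [eta eta0 H] := powR_small K d0 e0.
exists eta => // y Iy yx; apply: le_lt_trans (HF x y Ix Iy) _.
by apply: H => //; exact: ltW.
Qed.

Lemma ln_sub_le x y : 0 < x -> 0 < y -> ln x - ln y <= (x - y) / y.
Proof.
move=> x0 y0; rewrite -ln_div ?posrE //.
have -> : x / y = 1 + (x - y) / y by field; rewrite gt_eqF.
apply: le_ln1Dx.
have -> : (x - y) / y = x / y - 1 by field; rewrite gt_eqF.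
have : 0 < x / y by rewrite divr_gt0.
lra.
Qed.

Lemma ln_lipschitz m x y : 0 < m -> m <= x -> m <= y ->
  `|ln x - ln y| <= `|x - y| / m.
Proof.
move=> m0 mx my.
have x0 : 0 < x by exact: lt_le_trans m0 mx.
have y0 : 0 < y by exact: lt_le_trans m0 my.
have bound z : m <= z -> `|x - y| / z <= `|x - y| / m.
  by move=> mz; apply: ler_wpM2l => //; rewrite lef_pV2 ?posrE //; lra.
have k1 : (x - y) / y <= `|x - y| / m.
  by apply: le_trans (bound _ my); rewrite ler_pM2r ?invr_gt0 // ler_norm.
have k2 : (y - x) / x <= `|x - y| / m.
  by apply: le_trans (bound _ mx); rewrite ler_pM2r ?invr_gt0 // distrC ler_norm.
have := ln_sub_le x0 y0; have := ln_sub_le y0 x0.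
rewrite ler_norml => h1 h2; apply/andP; split; lra.
Qed.

End ContinuityOnI.

Section Diffeomorphisms.
Variable R : realType.
Implicit Types (F H : R -> R) (x y d : R).

Definition Iinverse F H :=
  forall x, II x -> II (F x) /\ II (H x) /\ H (F x) = x /\ F (H x) = x.

Lemma Iinverse_inj F H : Iinverse F H ->
  forall x, II x -> forall y, II y -> F y = F x -> y = x.
Proof.
move=> inv x Ix y Iy E; have [_ [_ [<- _]]] := inv y Iy; rewrite E.
by case: (inv x Ix) => _ [_ [-> _]].
Qed.

Lemma Iinverse_deriv_neq0 F H (F1 H1 : R -> R) : Iinverse F H ->
  (forall x, II x -> Ideriv F x (F1 x)) -> (forall x, II x -> Ideriv H x (H1 x)) ->
  forall x, II x -> F1 x != 0.
Proof.
move=> inv DF DH x Ix; have FI y : II y -> II (F y) by move=> /inv [].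
have DHF := Ideriv_comp Ix FI (Iinverse_inj inv Ix) (DF x Ix) (DH (F x) (FI x Ix)).
have DHF1 : Ideriv (H \o F) x 1.
  by apply: Ideriv_id => // y Iy /=; case: (inv y Iy) => _ [_ [-> _]].
apply/eqP => F10; move: (Ideriv_unique Ix DHF DHF1).
by rewrite F10 mulr0 => /esym/eqP; rewrite oner_eq0.
Qed.

Lemma Ideriv0_ge0 F d : F 0 = 0 -> (forall y, II y -> II (F y)) ->
  Ideriv F 0 d -> 0 <= d.
Proof.
move=> F0 FI /IderivP DF; rewrite leNgt; apply/negP => d0.
have [eta eta0 He] := DF (- d) (ltac:(lra)).
have [y [Iy y0 ye]] := II_near_neq II0 eta0.
have := He y Iy y0 ye; rewrite F0 !subr0.
have ypos : 0 < y by move/IIP: Iy => /andP[y_ge0 _]; rewrite lt_def y0 y_ge0.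
have /IIP /andP[Fy0 _] := FI y Iy.
have : 0 <= F y / y by rewrite divr_ge0 // ltW.
have := ler_norm (F y / y - d); lra.
Qed.

Lemma DiffI1delta_ln_deriv_holder d f : 0 < d -> DiffI1delta d f ->
  exists (f1 h : R -> R) (Kf : R),
  [/\ forall x, II x -> Ideriv f x (f1 x), forall x, II x -> 0 < f1 x,
      0 <= Kf /\ forall s t, II s -> II t ->
        `|ln (f1 t) - ln (f1 s)| <= Kf * `|t - s| `^ d,
      Iinverse f h & forall x, II x -> Icont h x].
Proof.
move=> d0 [[f0 [_ [h [inv [_ [h1 [Dh _]]]]]]] [f1 [Df [K HK]]]].
have f1_neq0 := Iinverse_deriv_neq0 inv Df Dh.
have f1_cont := holder_Icont d0 HK.
have f10 : 0 < f1 0.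
  rewrite lt_def (f1_neq0 0 II0) /=.
  by apply: (Ideriv0_ge0 f0 _ (Df 0 II0)) => y /inv [].
have f1_gt0 := Icont_gt0 f1_cont f1_neq0 f10.
have [m m0 Hm] := Icont_min f1_cont f1_gt0.
exists f1, h, (`|K| / m); split => //.
- split; first by rewrite divr_ge0 // ltW.
  move=> s t Is It; apply: le_trans (ln_lipschitz m0 (Hm _ It) (Hm _ Is)) _.
  rewrite mulrAC ler_pM2r ?invr_gt0 //; apply: le_trans (HK s t Is It) _.
  by apply: ler_wpM2r; [exact: powR_ge0 | exact: ler_norm].
- by move=> x Ix; apply: Ideriv_Icont (Dh x Ix).
Qed.

Lemma Diff03_deriv_gt0 g g1 : Diff03 g -> (forall x, II x -> Ideriv g x (g1 x)) ->
  forall x, II x -> 0 < g1 x.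
Proof.
move=> [[_ [_ [k [inv [[ga [Dga [gb [Dgb _]]]] [k1 [Dk _]]]]]]] [g1' [Dg' [g10 _]]]] Dg.
have g1_ga y : II y -> ga y = g1 y by move=> Iy; apply: Ideriv_unique (Dga y Iy) (Dg y Iy).
have g1_cont x : II x -> Icont g1 x.
  by move=> Ix; apply: Icont_eq g1_ga Ix (Ideriv_Icont (Dgb x Ix)).
apply: Icont_gt0 g1_cont (Iinverse_deriv_neq0 inv Dg Dk) _.
by rewrite -(Ideriv_unique II0 (Dg' 0 II0) (Dg 0 II0)) g10 ltr01.
Qed.

Lemma pdelta_le_holder d C h1 : (pdelta d h1 <= C%:E)%E ->
  `|ln (h1 0)| <= C /\ forall s t, II s -> II t ->
    `|ln (h1 t) - ln (h1 s)| <= C * `|t - s| `^ d.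
Proof.
rewrite /pdelta => H.
have key s t : II s -> II t -> s <> t ->
    `|ln (h1 0)| + `|ln (h1 t) - ln (h1 s)| / (`|t - s| `^ d) <= C.
  move=> Is It st; rewrite -lee_fin EFinD; apply: le_trans H.
  by apply: leeD2l; apply: ereal_sup_ubound; exists s, t.
have ratio_ge0 s t : 0 <= `|ln (h1 t) - ln (h1 s)| / (`|t - s| `^ d).
  by rewrite divr_ge0 // powR_ge0.
have lnh10 : `|ln (h1 0)| <= C.
  have := key 0 1 II0 II1 (ltac:(by apply/eqP; rewrite eq_sym oner_neq0)).
  by have := ratio_ge0 0 1; lra.
split => // s t Is It; have [->|st] := eqVneq s t.
  by rewrite !subrr normr0 mulr_ge0 ?powR_ge0 //; have := normr_ge0 (ln (h1 0)); lra.
have p0 : 0 < `|t - s| `^ d by rewrite powR_gt0 // normr_gt0 subr_eq0 eq_sym.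
rewrite -ler_pdivrMr // mulrC.
by have := key s t Is It (elimN eqP st); have := normr_ge0 (ln (h1 0)); lra.
Qed.

End Diffeomorphisms.

Section ArzelaAscoliOnI.
Variable R : realType.
Implicit Types (x y : R) (phi : R -> R) (A : set (R -> R)).

Definition Iequicontinuous A := forall u, II u -> forall e, 0 < e ->
  exists2 eta : R, 0 < eta &
    forall v, II v -> `|v - u| < eta -> forall phi, A phi -> `|phi u - phi v| < e.

Definition clamp x : R := Num.max 0 (Num.min x 1).

Lemma clampI x : II (clamp x).
Proof.
apply/IIP; rewrite /clamp le_max lexx ge_max ler01 /=.
by rewrite ge_min lexx orbT.
Qed.

Lemma clamp_id x : II x -> clamp x = x.
Proof. by move=> /IIP /andP[x0 x1]; rewrite /clamp (min_l x1) (max_r x0). Qed.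

Lemma clamp_lipschitz x y : `|clamp y - clamp x| <= `|y - x|.
Proof.
rewrite /clamp.
have [x1|x1] := leP x 1; have [y1|y1] := leP y 1;
have [x0|x0] := leP 0 (Num.min x 1); have [y0|y0] := leP 0 (Num.min y 1);
rewrite ?(min_l x1) ?(min_r (ltW x1)) ?(min_l y1) ?(min_r (ltW y1)) in x0 y0 *;
rewrite ?(max_r x0) ?(max_l (ltW x0)) ?(max_r y0) ?(max_l (ltW y0));
rewrite ler_norml; have := ler_norm (y - x); have := ler_norm (x - y);
rewrite distrC => *; apply/andP; split; lra.
Qed.

Lemma II_compact : compact (@II R).
Proof. exact: segment_compact. Qed.

(** Extending [phi] from [I] by constants puts us in [{family compact, R -> R}],
    where Ascoli's theorem is available. *)
Definition clamp_ext phi : R -> R := phi \o clamp.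

Lemma clamp_extK phi : clamp_ext (clamp_ext phi) = clamp_ext phi.
Proof. by apply: funext => x; rewrite /clamp_ext /= (clamp_id (clampI x)). Qed.

Lemma clamp_ext_continuous :
  continuous (clamp_ext : {family compact, R -> R} -> {family compact, R -> R}).
Proof.
move=> phi; apply/(@fam_cvgP R R compact (clamp_ext @ nbhs phi)).
move=> K _ P /uniform_nbhs [E [entE EP]].
apply: (filterS _ (@fam_nbhs R R compact (@II R) E phi entE II_compact)).
by move=> g Eg; apply: EP => y _; apply: Eg; exact: clampI.
Qed.

Lemma clamp_ext_continuous_uniformI :
  continuous (clamp_ext : {uniform` @II R -> R} -> {family compact, R -> R}).
Proof.
move=> phi; apply/(@fam_cvgP R R compact (clamp_ext @ nbhs phi)).
move=> K _ P /uniform_nbhs [E [entE EP]].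
apply/uniform_nbhs; exists E; split => // g Eg; apply: EP => y _.
by apply: Eg; exact: clampI.
Qed.

Lemma clamp_ext_precompact A M :
  (forall phi, A phi -> forall u, II u -> `|phi u| <= M) -> Iequicontinuous A ->
  precompact (clamp_ext @` A : set {family compact, R -> R}).
Proof.
move=> Abd Aeq.
have := (@Ascoli R R (@norm_hausdorff _ _) (clamp_ext @` A) (@locally_compactR R)).1.
case=> [|//]; split.
  move=> x; apply: (@precompact_subset _ _ `[- M, M]%classic).
    move=> r [_ [phi Aphi <-] <-]; rewrite /= in_itv /= -ler_norml.
    exact: Abd Aphi _ (clampI x).
  by apply: compact_precompact; [exact: norm_hausdorff | exact: segment_compact].
move=> x E; rewrite -entourage_from_ballE => -[e e0 ballE].
have [eta eta0 Heta] := Aeq (clamp x) (clampI x) e e0.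
apply/nbhs_ballP; exists eta => //= y xy _ [phi Aphi <-]; apply: ballE => /=.
apply: Heta => //; first exact: clampI.
by apply: le_lt_trans (clamp_lipschitz x y) _; rewrite distrC.
Qed.

Theorem Ascoli_uniformI A M :
  (forall phi, A phi -> forall u, II u -> `|phi u| <= M) -> Iequicontinuous A ->
  compact (closure (A : set {uniform` @II R -> R})).
Proof.
move=> Abd Aeq.
have [K0 AK0 [cK0 clK0]] := clamp_ext_precompact Abd Aeq.
pose K : set {family compact, R -> R} := K0 `&` clamp_ext @^-1` K0.
have clK : closed K.
  exact: (closedI clK0 ((continuous_closedP _).1 clamp_ext_continuous K0 clK0)).
have cK : compact K by apply: subclosed_compact clK cK0 _; exact: subIsetl.
(* Uniform convergence on [I] cannot separate [phi] from [clamp_ext phi], so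
   the closed preimage [B] of the compact set [K] is compact. *)
pose B : set {uniform` @II R -> R} := clamp_ext @^-1` K.
rewrite -precompactE; exists B.
  by move=> phi Aphi; rewrite /B /K /= clamp_extK; split; apply: AK0; exists phi.
split; last exact: (continuous_closedP _).1 clamp_ext_continuous_uniformI K clK.
move=> F PF FB; have [psi [Kpsi psi_clus]] := cK (clamp_ext @ F) _ FB.
exists (clamp_ext psi); split; first by rewrite /B /K /= !clamp_extK; case: Kpsi.
move=> Q P FQ /uniform_nbhs [E [entE EP]].
have FQ' : (clamp_ext @ F) (clamp_ext @` Q).
  by rewrite /fmap /=; apply: filterS FQ => h Qh; exists h.
have [_ [[h Qh <-] Eh]] :=
  psi_clus _ _ FQ' (@fam_nbhs R R compact (@II R) E psi entE II_compact).
exists h; split => //; apply: EP => y Iy.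
by have := Eh y Iy; rewrite /clamp_ext /= clamp_id.
Qed.

End ArzelaAscoliOnI.

Section LogDerivativeSet.
Variable R : realType.
Variables (d C Kf : R) (f f1 h : R -> R) (G : set (R -> R)).
Hypothesis d_gt0 : 0 < d.
Hypothesis G_Diff03 : G `<=` @Diff03 R.
Hypothesis f_deriv : forall x, II x -> Ideriv f x (f1 x).
Hypothesis f1_gt0 : forall x, II x -> 0 < f1 x.
Hypothesis Kf_ge0 : 0 <= Kf.
Hypothesis ln_f1_holder : forall s t, II s -> II t ->
  `|ln (f1 t) - ln (f1 s)| <= Kf * `|t - s| `^ d.
Hypothesis f_inv : Iinverse f h.
Hypothesis h_cont : forall x, II x -> Icont h x.

Let fI x : II x -> II (f x). Proof. by move=> /f_inv []. Qed.
Let hI x : II x -> II (h x). Proof. by move=> /f_inv [_ []]. Qed.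
Let fK x : II x -> f (h x) = x. Proof. by move=> /f_inv [_ [_ []]]. Qed.

Lemma A_C_comp phi : A_C d C f G phi -> exists h1 : R -> R,
  (pdelta d h1 <= C%:E)%E /\ forall t, II t -> phi (f t) = ln (h1 t) - ln (f1 t).
Proof.
move=> [g [g1 [h1 [Gg [Dg [Dh1 [pd ->]]]]]]]; exists h1; split => // t It.
have Dgf := Ideriv_comp It fI (Iinverse_inj f_inv It) (f_deriv It) (Dg _ (fI It)).
rewrite (Ideriv_unique It (Dh1 t It) Dgf) lnM ?posrE ?f1_gt0 ?addrK //.
exact: Diff03_deriv_gt0 (G_Diff03 Gg) Dg _ (fI It).
Qed.

Lemma A_C_comp_holder phi : A_C d C f G phi -> forall s t, II s -> II t ->
  `|phi (f t) - phi (f s)| <= (C + Kf) * `|t - s| `^ d.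
Proof.
move=> /A_C_comp [h1 [/pdelta_le_holder [_ Hh1] E]] s t Is It; rewrite !E //.
have := Hh1 s t Is It; have := ln_f1_holder Is It.
have : `|ln (h1 t) - ln (f1 t) - (ln (h1 s) - ln (f1 s))| <=
       `|ln (h1 t) - ln (h1 s)| + `|ln (f1 t) - ln (f1 s)|.
  have -> : ln (h1 t) - ln (f1 t) - (ln (h1 s) - ln (f1 s)) =
            (ln (h1 t) - ln (h1 s)) - (ln (f1 t) - ln (f1 s)) by ring.
  exact: ler_normB.
lra.
Qed.

Lemma A_C_bounded phi : A_C d C f G phi ->
  forall u, II u -> `|phi u| <= C + `|ln (f1 0)| + (C + Kf).
Proof.
move=> Aphi u Iu; rewrite -(fK Iu); set t := h u.
have It : II t := hI Iu.
have [h1 [/pdelta_le_holder [lnh10 _] E]] := A_C_comp Aphi.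
have phif0 : `|phi (f 0)| <= C + `|ln (f1 0)|.
  by rewrite (E 0 II0); apply: le_trans (ler_normB _ _) _; rewrite lerD2r.
have : `|phi (f t) - phi (f 0)| <= C + Kf.
  have CKf : 0 <= C + Kf by rewrite addr_ge0 // (le_trans _ lnh10).
  apply: le_trans (A_C_comp_holder Aphi II0 It) _; rewrite -[leRHS]mulr1.
  apply: (ler_wpM2l CKf).
  have /IIP /andP[t0 t1] := It.
  by rewrite subr0 ger0_norm // powR_le1 ?(ltW d_gt0) ?t0 ?t1.
have := ler_normD (phi (f t) - phi (f 0)) (phi (f 0)); rewrite subrK.
lra.
Qed.
Lemma A_C_equicontinuous : Iequicontinuous (A_C d C f G).
Proof.
move=> u Iu e e0.
have [eta' eta'0 small] := powR_small (C + Kf) d_gt0 e0.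
have [eta eta0 h_near] := h_cont Iu eta'0.
exists eta => // v Iv vu phi Aphi; rewrite -(fK Iu) -(fK Iv).
apply: le_lt_trans (A_C_comp_holder Aphi (hI Iv) (hI Iu)) _.
by apply: small; rewrite ?normr_ge0 // distrC ltW // h_near.
Qed.

End LogDerivativeSet.

Theorem mainTheorem14 (R : realType) (delta : R) (f : R -> R) (G : set (R -> R)) :
  0 < delta -> delta < 1 / 2 ->
  DiffI1delta delta f ->
  G `<=` Diff03 (R:=R) ->
  forall C : R, 0 < C ->
    compact (closure (A_C delta C f G : set {uniform` @II R -> R})).
Proof.
move=> d_gt0 _ f_diff G_Diff03 C _.
have [f1 [h [Kf [f_deriv f1_gt0 [Kf_ge0 ln_f1_holder] f_inv h_cont]]]] :=
  DiffI1delta_ln_deriv_holder d_gt0 f_diff.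
apply: Ascoli_uniformI.
  exact: A_C_bounded d_gt0 G_Diff03 f_deriv f1_gt0 Kf_ge0 ln_f1_holder f_inv.
exact: A_C_equicontinuous d_gt0 G_Diff03 f_deriv f1_gt0 ln_f1_holder f_inv h_cont.
Qed.
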